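(* Consider the power-law kinetic system on species $A_1,A_2,A_3$ with reactions $R_1: A_1+A_3\to A_1+A_2$, $R_2: A_1+A_2\to 2A_3$, $R_3: 2A_3\to A_1+A_3$, $R_4: A_3\to 0$, $R_5: A_3\to A_2+A_3$, with rates $k_r x^{F_r}$ where the kinetic order rows are $F_{R_1}=(0.5,0,0.5)$, $F_{R_2}=(1,1,0)$, $F_{R_3}=(0,0,1)$, $F_{R_4}=(0,0,1)$, $F_{R_5}=(0,0,1)$. This network has deficiency one, is not $t$-minimal, and the complexes $A_1+A_2$ and $2A_3$ do not form a cut pair; nevertheless the system has the capacity for multistationarity: there exist positive rate constants $k_{R_1},\dots,k_{R_5}$ for which $dx/dt=\sum_r k_r x^{F_r}(y'_r-y_r)$ has two distinct positive equilibria $c^*,c^{**}$ with $c^*-c^{**}$ in the stoichiometric subspace.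
   Context: For $x\in\mathbb{R}^3_{>0}$, $x^{F}=\prod_s x_s^{F_s}$; $y_r\to y'_r$ denotes reaction $r$. The stoichiometric subspace $S$ is the span of the reaction vectors. The deficiency is $n-l-\dim S$ ($n$ complexes, $l$ linkage classes, i.e. connected components of the reaction graph). A network is $t$-minimal if its number of terminal strong linkage classes (strongly connected components with no outgoing reaction) equals its number of linkage classes. Two adjacent complexes form a cut pair if removing the reaction arrow(s) between them disconnects their linkage class. *)

From Stdlib Require Import Reals.
From HB Require Import structures.
From mathcomp Require Import all_boot all_order all_algebra.

Set Implicit Arguments.
Unset Strict Implicit.
Unset Printing Implicit Defensive.

(* ns species, nc (distinct) complexes, nr reactions; complex i has
   stoichiometric coefficient [cplx i s] for species s; reaction r is
   src r -> tgt r. *)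
Record network := Network {
  ns : nat;
  nc : nat;
  nr : nat;
  cplx : 'I_nc -> 'I_ns -> nat;
  src : 'I_nr -> 'I_nc;
  tgt : 'I_nr -> 'I_nc
}.

Section NetworkDefs.
Variable N : network.

Definition reacts : rel 'I_(nc N) :=
  fun a b => [exists r : 'I_(nr N), (src r == a) && (tgt r == b)].

Definition adjacent : rel 'I_(nc N) := fun a b => reacts a b || reacts b a.

Definition n_linkage : nat := n_comp adjacent predT.

Definition stoich_mx : 'M[rat]_(nr N, ns N) :=
  \matrix_(r, s) (((cplx (tgt r) s)%:R - (cplx (src r) s)%:R) : rat)%R.

Definition dim_S : nat := \rank stoich_mx.

Definition deficiency : int :=
  ((nc N)%:Z - (n_linkage)%:Z - (dim_S)%:Z)%R.

Definition strongly_linked : rel 'I_(nc N) :=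
  fun a b => connect reacts a b && connect reacts b a.

(* a complex lies in a terminal strong linkage class iff everything
   reachable from it can reach it back (no reaction leaves its class) *)
Definition terminal : pred 'I_(nc N) :=
  fun a => [forall b, connect reacts a b ==> connect reacts b a].

Definition n_terminal_slc : nat := n_comp strongly_linked terminal.

Definition t_minimal : Prop := n_terminal_slc = n_linkage.

(* cut pair: a and b adjacent, and removing the reaction arrow(s) between
   them disconnects their linkage class *)
Definition adjacent_without (a b : 'I_(nc N)) : rel 'I_(nc N) :=
  fun x y => adjacent x y && ~~ (((x == a) && (y == b)) || ((x == b) && (y == a))).

Definition cut_pair (a b : 'I_(nc N)) : Prop :=
  adjacent a b /\
  exists x y, connect adjacent a x /\ connect adjacent a y /\
              ~~ connect (adjacent_without a b) x y.

Definition monomial (F : 'I_(nr N) -> 'I_(ns N) -> R) (x : 'I_(ns N) -> R)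
    (r : 'I_(nr N)) : R :=
  \big[Rmult/R1]_(s < ns N) Rpower (x s) (F r s).

Definition rvec (r : 'I_(nr N)) (s : 'I_(ns N)) : R :=
  Rminus (INR (cplx (tgt r) s)) (INR (cplx (src r) s)).

Definition plk_rhs (k : 'I_(nr N) -> R) (F : 'I_(nr N) -> 'I_(ns N) -> R)
    (x : 'I_(ns N) -> R) (s : 'I_(ns N)) : R :=
  \big[Rplus/R0]_(r < nr N) Rmult (Rmult (k r) (monomial F x r)) (rvec r s).

Definition positive_equilibrium k F (x : 'I_(ns N) -> R) : Prop :=
  (forall s, Rlt R0 (x s)) /\ (forall s, plk_rhs k F x s = R0).

Definition in_stoich_subspace (v : 'I_(ns N) -> R) : Prop :=
  exists a : 'I_(nr N) -> R,
    forall s, v s = \big[Rplus/R0]_(r < nr N) Rmult (a r) (rvec r s).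

Definition has_multistationarity_capacity
    (F : 'I_(nr N) -> 'I_(ns N) -> R) : Prop :=
  exists k : 'I_(nr N) -> R, (forall r, Rlt R0 (k r)) /\
  exists c1 c2 : 'I_(ns N) -> R,
    positive_equilibrium k F c1 /\ positive_equilibrium k F c2 /\
    (exists s, c1 s <> c2 s) /\
    in_stoich_subspace (fun s => Rminus (c1 s) (c2 s)).

End NetworkDefs.

(* Species: index 0 = A1, 1 = A2, 2 = A3.                              *)
(* Complexes: 0 = A1+A3, 1 = A1+A2, 2 = 2A3, 3 = A3, 4 = 0, 5 = A2+A3  *)
(* Reactions: R1 : 0 -> 1, R2 : 1 -> 2, R3 : 2 -> 0, R4 : 3 -> 4,      *)
(*            R5 : 3 -> 5  (R_i has index i-1).                        *)

Definition ex_cplx_table : seq (seq nat) :=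
  [:: [:: 1; 0; 1]; [:: 1; 1; 0]; [:: 0; 0; 2];
      [:: 0; 0; 1]; [:: 0; 0; 0]; [:: 0; 1; 1]].
Definition ex_src_table : seq nat := [:: 0; 1; 2; 3; 3].
Definition ex_tgt_table : seq nat := [:: 1; 2; 0; 4; 5].

Definition ex_network : network :=
  @Network 3 6 5
    (fun i s => nth 0 (nth [::] ex_cplx_table i) s)
    (fun r => inord (nth 0 ex_src_table r))
    (fun r => inord (nth 0 ex_tgt_table r)).

Definition ex_F_table : seq (seq R) :=
  [:: [:: Rdiv R1 2; R0; Rdiv R1 2];
      [:: R1; R1; R0];
      [:: R0; R0; R1];
      [:: R0; R0; R1];
      [:: R0; R0; R1]].

Definition ex_F : 'I_(nr ex_network) -> 'I_(ns ex_network) -> R :=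
  fun r s => nth R0 (nth [::] ex_F_table r) s.

Definition cA1A2 : 'I_(nc ex_network) := inord 1.
Definition c2A3 : 'I_(nc ex_network) := inord 2.

(* The four claims are proved separately.
   - Deficiency: the network has 6 complexes and 2 linkage classes; the
     stoichiometric matrix has an explicit left inverse, hence rank 3, so the
     deficiency is 6 - 2 - 3 = 1.
   - The number of linkage classes (2), of terminal strong linkage classes (3:
     the cycle A1+A3 -> A1+A2 -> 2A3 -> A1+A3 and the two sinks 0, A2+A3) and
     the failure of the cut-pair property (the edge A1+A2 -- 2A3 lies on that
     cycle) are decided by evaluating the finite-graph definitions. *)
From Stdlib Require Import Reals Lra FunctionalExtensionality.
From HB Require Import structures.
From mathcomp Require Import all_boot all_order all_algebra.

Lemma mxrank_left_invertible (F : fieldType) m n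
    (A : 'M[F]_(m, n)) (B : 'M[F]_(n, m)) :
  (B *m A = 1%:M)%R -> \rank A = n.
Proof.
move=> BA1; apply/eqP; rewrite eqn_leq rank_leq_col /=.
by rewrite -{1}(mxrank1 F n) -BA1 mxrankM_maxr.
Qed.

(* A transparent version of [insub] on ordinals: it decides [k < n] by
   dependent matching instead of through the opaque reflection lemma [idP],
   so that it reduces under [vm_compute]. *)
Definition ord_of_nat n k : option 'I_n :=
  (if k < n as b return (k < n = b -> option 'I_n)
   then fun lt_k_n => Some (Ordinal lt_k_n) else fun _ => None) erefl.

Lemma ord_of_natE n k : ord_of_nat n k = insub k.
Proof.
rewrite /ord_of_nat; case: insubP => [i lt_k_n val_i | ge_k_n].
  move: (erefl (k < n)); rewrite {2 3}lt_k_n => lt_k_n'.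
  by congr Some; apply: val_inj; rewrite /= val_i.
by move: (erefl (k < n)); rewrite {2 3}(negbTE ge_k_n).
Qed.

(* Computable forms of the (locked) enumeration of 'I_n and of [inord]. *)
Lemma enum_ordE n : Finite.enum 'I_n = pmap (@ord_of_nat n) (iota 0 n).
Proof.
apply: (inj_map val_inj).
rewrite -enumT val_enum_ord (eq_pmap (@ord_of_natE n)).
exact: (esym (val_ord_enum n)).
Qed.

Lemma inordE : @inord = fun n k => odflt ord0 (ord_of_nat n.+1 k).
Proof.
apply: functional_extensionality_dep => n; apply: functional_extensionality => k.
by rewrite ord_of_natE.
Qed.

(* Decides a closed boolean statement about finite graphs on ordinals:
   unfold everything, unlock cardinals (which re-exposes enumerations),
   replace enumerations and [inord] by their computable forms, evaluate. *)
Ltac evaluate_finite :=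
  cbv -[card Finite.enum inord]; rewrite ?card.unlock;
  cbv -[Finite.enum inord]; rewrite ?enum_ordE ?inordE;
  vm_compute; reflexivity.

(* Linkage classes: {A1+A3, A1+A2, 2A3} and {A3, 0, A2+A3}. *)
Lemma ex_n_linkage : n_linkage ex_network = 2.
Proof. rewrite /n_linkage; evaluate_finite. Qed.

(* Terminal strong linkage classes: the 3-cycle, {0} and {A2+A3}. *)
Lemma ex_n_terminal_slc : n_terminal_slc ex_network = 3.
Proof. rewrite /n_terminal_slc; evaluate_finite. Qed.

Lemma ex_not_t_minimal : ~ t_minimal ex_network.
Proof. by rewrite /t_minimal ex_n_terminal_slc ex_n_linkage. Qed.

(* A left inverse of the 5 x 3 stoichiometric matrix (rows = reaction
   vectors): it combines R3, R4 and R5 into the unit vectors. *)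
Definition ex_stoich_left_inverse : 'M[rat]_(3, 5) :=
  \matrix_(i < 3, r < 5)
    (nth 0 (nth [::] [:: [:: 0; 0; 1; -1; 0];
                         [:: 0; 0; 0;  0; 1];
                         [:: 0; 0; 0; -1; 0]] i) r)%R.

Lemma ex_stoich_left_inverseP :
  (ex_stoich_left_inverse *m stoich_mx ex_network = 1%:M)%R.
Proof.
apply/matrixP => i j; rewrite !mxE !big_ord_recl big_ord0 !mxE /= ?inordE /=.
case: i => [[|[|[|i]]] lt_i3]; case: j => [[|[|[|j]]] lt_j3] //=.
all: by apply/eqP; vm_compute.
Qed.

Lemma ex_dim_S : dim_S ex_network = 3.
Proof. exact: mxrank_left_invertible ex_stoich_left_inverseP. Qed.

Lemma ex_deficiency : deficiency ex_network = Posz 1.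
Proof. by rewrite /deficiency ex_dim_S ex_n_linkage. Qed.

(* Removing the arrow A1+A2 -> 2A3 leaves the linkage class of A1+A2
   connected, since both complexes still lie on the path through A1+A3. *)
Lemma ex_connected_without_cut :
  [forall x, forall y,
     connect (@adjacent ex_network) cA1A2 x ==>
     connect (@adjacent ex_network) cA1A2 y ==>
     connect (adjacent_without cA1A2 c2A3) x y].
Proof. evaluate_finite. Qed.

Lemma ex_not_cut_pair : ~ cut_pair cA1A2 c2A3.
Proof.
case=> _ [x [y [conn_x [conn_y not_conn_xy]]]].
move/forallP: ex_connected_without_cut => /(_ x) /forallP /(_ y).
by rewrite conn_x conn_y (negbTE not_conn_xy).
Qed.

Open Scope R_scope.

Lemma ex_rvec (r : 'I_(nr ex_network)) (s : 'I_(ns ex_network)) :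
  rvec r s = nth 0 (nth [::] [:: [:: 0; 1; -1]; [:: -1; -1; 2]; [:: 1; 0; -1];
                               [:: 0; 0; -1]; [:: 0; 1; 0]] r) s.
Proof.
rewrite /rvec /=; case: r => [[|[|[|[|[|r]]]]] lt_r5] //; rewrite !inordK //.
all: by case: s => [[|[|[|s]]] lt_s3] //=; lra.
Qed.

Lemma ex_stoich_subspace_full (v : 'I_(ns ex_network) -> R) :
  in_stoich_subspace v.
Proof.
exists (fun r => nth 0 [:: 0; 0; v (inord 0); - v (inord 0) - v (inord 2);
                           v (inord 1)] r).
case=> [[|[|[|s]]] lt_s3] //; rewrite !big_ord_recl big_ord0 !ex_rvec /=.
all: by rewrite -[Ordinal _]inord_val /=; lra.
Qed.

Definition ex_rates (k1 k2 k3 k4 k5 : R) : 'I_(nr ex_network) -> R :=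
  fun r => nth 0 [:: k1; k2; k3; k4; k5] r.

Definition ex_conc (x1 x2 x3 : R) : 'I_(ns ex_network) -> R :=
  fun s => nth 0 [:: x1; x2; x3] s.

Lemma Rpower_half (t : R) : 0 < t -> Rpower t (R1 / 2) = sqrt t.
Proof. by move=> t_gt0; rewrite -Rpower_sqrt // /Rdiv Rmult_1_l. Qed.

Lemma ex_plk_rhs k1 k2 k3 k4 k5 x1 x2 x3 (s : 'I_(ns ex_network)) :
  0 < x1 -> 0 < x2 -> 0 < x3 ->
  plk_rhs (ex_rates k1 k2 k3 k4 k5) ex_F (ex_conc x1 x2 x3) s =
  nth 0 [:: k3 * x3 - k2 * x1 * x2;
            k1 * sqrt (x1 * x3) - k2 * x1 * x2 + k5 * x3;
            2 * k2 * x1 * x2 - k1 * sqrt (x1 * x3) - (k3 + k4) * x3] s.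
Proof.
move=> x1_gt0 x2_gt0 x3_gt0.
rewrite /plk_rhs /monomial !big_ord_recl !big_ord0 !ex_rvec /ex_F /ex_rates /ex_conc /=.
rewrite !Rpower_O // !Rpower_1 // !Rpower_half // sqrt_mult; try lra.
by case: s => [[|[|[|s]]] lt_s3] //=; ring.
Qed.

Lemma ex_equilibrium_curve (t : R) : 0 < t ->
  positive_equilibrium (ex_rates 1 1 2 1 1) ex_F (ex_conc t 2 t).
Proof.
move=> t_gt0; split => s.
  by case: s => [[|[|[|s]]] lt_s3] //=; rewrite /ex_conc /=; lra.
rewrite ex_plk_rhs ?sqrt_square; try lra.
by case: s => [[|[|[|s]]] lt_s3] //=; lra.
Qed.

Lemma ex_multistationarity : has_multistationarity_capacity ex_F.
Proof.
exists (ex_rates 1 1 2 1 1); split.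
  by case=> [[|[|[|[|[|r]]]]] lt_r5] //=; rewrite /ex_rates /=; lra.
exists (ex_conc 1 2 1), (ex_conc 4 2 4).
split; first by apply: ex_equilibrium_curve; lra.
split; first by apply: ex_equilibrium_curve; lra.
split; last exact: ex_stoich_subspace_full.
by exists ord0; rewrite /ex_conc /=; lra.
Qed.

Close Scope R_scope.

Theorem mainTheorem7 :
  deficiency ex_network = Posz 1 /\
  ~ t_minimal ex_network /\
  ~ cut_pair cA1A2 c2A3 /\
  has_multistationarity_capacity ex_F.
Proof.
split; first exact: ex_deficiency.
split; first exact: ex_not_t_minimal.
split; first exact: ex_not_cut_pair.
exact: ex_multistationarity.
Qed.
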